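(* Let $X$ be a continuum, let $n\geq2$ be an integer, and let $f:X\to X$ be a map. Consider the statements: (1) $f$ is indecomposable; (2) $F_n(f)$ is indecomposable; (3) $SF_n(f)$ is indecomposable. Then (2) and (3) are equivalent, and (2) implies (1).
   Context: A continuum is a nonempty compact connected metric space. $F_n(X)$ is the set of nonempty subsets of $X$ with at most $n$ points, with the Hausdorff metric topology; $F_1(X)=\{\{x\}:x\in X\}$; $F_n(f)(A)=f(A)$. $SF_n(X)=F_n(X)/F_1(X)$ is the quotient collapsing $F_1(X)$ to a point, $q$ the quotient map, $F_X=q(F_1(X))$, and $SF_n(f)(\chi)=q(F_n(f)(q^{-1}(\chi)))$ for $\chi\neq F_X$, $SF_n(f)(F_X)=F_X$. A map $g:Z\to Z$ is indecomposable if for any two closed sets $A,B\subseteq Z$ with $g(A)\subseteq A$, $g(B)\subseteq B$, $\mathrm{int}(A)\neq\emptyset$ and $\mathrm{int}(B)\neq\emptyset$, one has $\mathrm{int}(A\cap B)\neq\emptyset$. *)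

From HB Require Import structures.
From mathcomp Require Import all_boot all_order all_algebra.
From mathcomp Require Import all_classical all_reals all_analysis.
Set Implicit Arguments. Unset Strict Implicit. Unset Printing Implicit Defensive.
Import Order.TTheory GRing.Theory Num.Theory.
Local Open Scope classical_set_scope.
Local Open Scope ring_scope.

Section Indec.
Variable (Z : Type) (opn : set Z -> Prop).

Definition int_ne (A : set Z) : Prop :=
  exists U : set Z, [/\ opn U, U !=set0 & U `<=` A].

Definition is_closed (A : set Z) : Prop := opn (~` A).

Definition indecomposable (g : Z -> Z) : Prop :=
  forall A B : set Z, is_closed A -> is_closed B ->
    g @` A `<=` A -> g @` B `<=` B ->
    int_ne A -> int_ne B -> int_ne (A `&` B).
End Indec.

Section Hyper.
Variables (R : realType) (X : metricType R).

Definition is_Fn (n : nat) (A : set X) : Prop :=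
  exists s : seq X, (0 < size s <= n)%N /\ A = [set x | x \in s].

Definition Fn (n : nat) := {A : set X | is_Fn n A}.

Definition hdist (A B : set X) : R :=
  Num.max (sup [set inf [set mdist a b | b in B] | a in A])
          (sup [set inf [set mdist a b | a in A] | b in B]).

Definition Fn_open (n : nat) (U : set (Fn n)) : Prop :=
  forall A : Fn n, U A ->
    exists2 e : R, 0 < e & forall B : Fn n, hdist (proj1_sig A) (proj1_sig B) < e -> U B.

Lemma is_Fn_image (n : nat) (f : X -> X) (A : Fn n) : is_Fn n (f @` proj1_sig A).
Proof.
case: A => A /= [s [hs ->]]; exists (map f s); rewrite size_map; split => //.
apply/seteqP; split => y /=.
  by case=> x xs <-; apply: map_f.
by case/mapP=> x xs ->; exists x.
Qed.

Definition Fn_map (n : nat) (f : X -> X) (A : Fn n) : Fn n :=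
  exist _ (f @` proj1_sig A) (is_Fn_image f A).

Definition is_single (A : set X) : Prop := exists x : X, A = [set x].

(* SF_n(X) = F_n(X)/F_1(X): None is the point F_X, Some A for A not in F_1(X) *)
Definition SF (n : nat) := option {A : Fn n | ~ is_single (proj1_sig A)}.

Definition SF_q (n : nat) (A : Fn n) : SF n :=
  match pselect (is_single (proj1_sig A)) with
  | left _ => None
  | right h => Some (exist _ A h)
  end.

Definition SF_open (n : nat) (U : set (SF n)) : Prop := Fn_open (@SF_q n @^-1` U).

Definition SF_map (n : nat) (f : X -> X) (c : SF n) : SF n :=
  match c with
  | None => None
  | Some A => SF_q (Fn_map f (proj1_sig A))
  end.
End Hyper.

From HB Require Import structures.
From mathcomp Require Import all_boot all_order all_algebra.
From mathcomp Require Import all_classical all_reals all_analysis.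
From mathcomp Require Import lra.
Import Order.TTheory GRing.Theory Num.Theory.
Local Open Scope classical_set_scope.
Local Open Scope ring_scope.
Set Implicit Arguments. Unset Strict Implicit.

(* The quotient map q : F_n(X) -> SF_n(X) collapses the closed, F_n(f)-invariant
   set F_1(X) and is injective off it.  A nondegenerate continuum has no isolated
   points, so for n >= 2 the set F_1(X) has empty interior: {x} is approximated by
   {x, y} with y close to x.  Hence closed invariant sets with nonempty interior are
   transported in both directions, by C |-> q^-1(C) and A |-> q(A ∪ F_1(X)), and
   the two only differ on F_1(X), so indecomposability passes both ways.
   For (2) => (1), a closed invariant A ⊆ X with nonempty interior yields the
   closed invariant set <A> = {K | K ⊆ A} of F_n(X) with nonempty interior.  If an
   open V ⊆ <A> ∩ <B> contains K and k ∈ K, moving k alone to any nearby y gives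
   a set still in V, so a neighbourhood of k lies in A ∩ B. *)

Section interior.
Variables (Z : Type) (opn : set Z -> Prop).

Lemma int_neS (A B : set Z) : A `<=` B -> int_ne opn A -> int_ne opn B.
Proof. by move=> AB [U [oU U0 UA]]; exists U; split=> //; apply: subset_trans AB. Qed.

Lemma indecomposable_subsingleton (g : Z -> Z) :
  (forall a b : Z, a = b) -> opn [set: Z] -> indecomposable opn g.
Proof.
move=> Z1 oT A B _ _ _ _ [U [_ [a Ua] UA]] [V [_ [b Vb] VB]].
exists [set: Z]; split=> //; first by exists a.
by move=> z _; split; [rewrite (Z1 z a); exact: UA | rewrite (Z1 z b); exact: VB].
Qed.

End interior.

Section collapse.
Variables (Z Q : Type) (opnZ : set Z -> Prop) (opnQ : set Q -> Prop).
Variables (q : Z -> Q) (g : Z -> Z) (h : Q -> Q) (S : set Z).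
Hypothesis opnZI : forall U V, opnZ U -> opnZ V -> opnZ (U `&` V).
Hypothesis opnQE : forall W, opnQ W <-> opnZ (q @^-1` W).
Hypothesis q_surj : forall c, exists z, q z = c.
Hypothesis q_inj_off : forall x y, q x = q y -> x = y \/ S x /\ S y.
Hypothesis q_semiconj : forall z, q (g z) = h (q z).
Hypothesis S_closed : is_closed opnZ S.
Hypothesis S_empty_interior : ~ int_ne opnZ S.
Hypothesis g_S : g @` S `<=` S.

Lemma int_ne_setDS A : int_ne opnZ A -> int_ne opnZ (A `\` S).
Proof.
move=> [U [oU [u Uu] UA]].
have [z Uz nSz] : exists2 z, U z & ~ S z.
  apply: contra_notP S_empty_interior => nUS; exists U; split=> //; first by exists u.
  by move=> z Uz; apply: contra_notP nUS => ?; exists z.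
by exists (U `&` ~` S); split; [exact: opnZI | exists z | move=> y [/UA]].
Qed.

Lemma preimage_image_setUS A : q @^-1` (q @` (A `|` S)) = A `|` S.
Proof.
apply/seteqP; split=> [x [y ASy /q_inj_off [<- // | [_ Sx]]] | x ASx]; first by right.
by exists x.
Qed.

Lemma preimage_image_disjoint U : U `<=` ~` S -> q @^-1` (q @` U) = U.
Proof.
move=> US; apply/seteqP; split=> [x [y Uy /q_inj_off [<- // | [Sy _]]] | x Ux].
  by case: (US y Uy).
by exists x.
Qed.

Lemma int_ne_image A : int_ne opnZ A -> int_ne opnQ (q @` A).
Proof.
move=> /int_ne_setDS [U [oU [u Uu] UAS]].
exists (q @` U); split; last by move=> _ [x /UAS [Ax _] <-]; exists x.
  by apply/opnQE; rewrite preimage_image_disjoint // => x /UAS [].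
by exists (q u), u.
Qed.

Lemma int_ne_preimage C : int_ne opnQ C -> int_ne opnZ (q @^-1` C).
Proof.
move=> [W [/opnQE oW [c Wc] WC]]; have [z qz] := q_surj c.
by exists (q @^-1` W); split=> //; [exists z; rewrite /preimage/= qz | move=> x /WC].
Qed.

Lemma indecomposable_quotient : indecomposable opnZ g <-> indecomposable opnQ h.
Proof.
split=> [indg C D cC cD hC hD iC iD | indh A B cA cB gA gB iA iB].
  have inv_pre E : h @` E `<=` E -> g @` (q @^-1` E) `<=` q @^-1` E.
    by move=> hE _ [z Ez <-]; rewrite /preimage/= q_semiconj; apply: hE; exists (q z).
  have := indg _ _ (proj1 (opnQE _) cC) (proj1 (opnQE _) cD) (inv_pre _ hC)
    (inv_pre _ hD) (int_ne_preimage iC) (int_ne_preimage iD).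
  by move=> /int_ne_image; apply: int_neS => _ [z [Cz Dz] <-].
pose sat E := q @` (E `|` S).
have closed_sat E : is_closed opnZ E -> is_closed opnQ (sat E).
  move=> cE; apply/opnQE; rewrite -preimage_setC preimage_image_setUS setCU.
  exact: opnZI.
have inv_sat E : g @` E `<=` E -> h @` sat E `<=` sat E.
  move=> gE _ [_ [z ESz <-] <-]; rewrite -q_semiconj; exists (g z) => //.
  by case: ESz => [Ez | Sz]; [left; apply: gE | right; apply: g_S]; exists z.
have int_sat E : int_ne opnZ E -> int_ne opnQ (sat E).
  by move=> /int_ne_image; apply: int_neS => _ [z Ez <-]; exists z; first left.
have := indh _ _ (closed_sat _ cA) (closed_sat _ cB) (inv_sat _ gA) (inv_sat _ gB)
  (int_sat _ iA) (int_sat _ iB).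
move=> /int_ne_preimage; rewrite preimage_setI !preimage_image_setUS.
by move=> /int_ne_setDS; apply: int_neS => z [[[Az | ?] [Bz | ?]] ?].
Qed.

End collapse.

Section hyperspace.
Variables (R : realType) (X : metricType R).

Lemma connected_perfectT :
  connected [set: X] -> (exists x y : X, x != y) -> perfect_set [set: X].
Proof.
move=> cX [x [y xy]]; apply/perfectTP => z oz.
have zT : [set z] = [set: X].
  apply: cX; first by exists z.
    by exists [set z]; rewrite ?setTI.
  exists [set z]; rewrite ?setTI //.
  exact/accessible_closed_set1/hausdorff_accessible/metric_hausdorff.
have all_z w : w = z by have : [set: X] w by []; rewrite -zT.
by move/eqP: xy; apply; rewrite (all_z x) (all_z y).
Qed.

Lemma perfectT_mdist : perfect_set [set: X] ->
  forall (x : X) e, 0 < e -> exists2 y, y != x & mdist x y < e.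
Proof.
move=> [_ limT] x e e0; have : limit_point [set: X] x by rewrite limT.
by move=> /(_ _ (nbhsx_ballx x _ e0)) [y [yx _]]; rewrite ballEmdist; exists y.
Qed.

Lemma open_seq_ball (U : set X) (s : seq X) : open U -> (forall k, k \in s -> U k) ->
  exists2 e, 0 < e & forall k, k \in s -> ball k e `<=` U.
Proof.
move=> oU; elim: s => [|k s IH] sU; first by exists 1.
have [e1 e10 kU] : exists2 e, 0 < e & ball k e `<=` U.
  by apply/nbhs_ballP; move: oU; rewrite openE; apply; apply: sU; rewrite mem_head.
have [e2 e20 ksU] := IH (fun z zs => sU z (mem_behead (s := k :: s) zs)).
exists (Num.min e1 e2); first by rewrite lt_min e10 e20.
move=> z; rewrite inE => /predU1P [-> | zs].
  by apply: subset_trans kU; apply: le_ball; rewrite ge_min lexx.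
by apply: subset_trans (ksU _ zs); apply: le_ball; rewrite ge_min lexx orbT.
Qed.

Lemma is_Fn_neq0 n (A : set X) : is_Fn n A -> A !=set0.
Proof. by case=> [[|a s] [/andP [? _] ->]] //; exists a; rewrite /= mem_head. Qed.

Lemma is_Fn_set1 n (x : X) : (0 < n)%N -> is_Fn n [set x].
Proof.
move=> n0; exists [:: x]; split; first by rewrite /= n0.
by apply/seteqP; split=> z /=; rewrite inE => /eqP.
Qed.

Lemma sup_inf_lt m1 m2 (A B : set X) (g : X -> X -> R) r :
  is_Fn m1 A -> is_Fn m2 B -> (forall x y, 0 <= g x y) ->
  sup [set inf [set g a b | b in B] | a in A] < r ->
  forall a, A a -> exists2 b, B b & g a b < r.
Proof.
move=> [s [_ ->]] hB g0 supr a sa; have [b0 Bb0] := is_Fn_neq0 hB.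
have inf_le a' b : B b -> inf [set g a' b | b in B] <= g a' b.
  by move=> Bb; apply: ge_inf; [exists 0 => _ [? _ <-] | exists b].
have : inf [set g a b | b in B] < r.
  apply: le_lt_trans supr; apply: sup_upper_bound; last by exists a.
  split; first by exists (inf [set g a b | b in B]), a.
  exists (\big[Num.max/0]_(x <- s) g x b0) => _ [a' sa' <-].
  exact: le_trans (inf_le _ _ Bb0) (le_bigmax_seq 0 _ _ (fun x => g x b0) sa' isT).
by case/inf_lt => [| _ [b Bb <-]]; [exists (g a b0), b0 | exists b].
Qed.

Lemma sup_inf_le (A B : set X) (g : X -> X -> R) r : A !=set0 ->
  (forall x y, 0 <= g x y) -> (forall a, A a -> exists2 b, B b & g a b <= r) ->
  sup [set inf [set g a b | b in B] | a in A] <= r.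
Proof.
move=> [a0 Aa0] g0 close; apply: ge_sup; first by exists (inf [set g a0 b | b in B]), a0.
move=> _ [a Aa <-]; have [b Bb gab] := close a Aa.
by apply: le_trans gab; apply: ge_inf; [exists 0 => _ [? _ <-] | exists b].
Qed.

Lemma hdist_lt m1 m2 (K L : set X) r : is_Fn m1 K -> is_Fn m2 L -> hdist K L < r ->
  (forall a, K a -> exists2 b, L b & mdist a b < r) /\
  (forall b, L b -> exists2 a, K a & mdist a b < r).
Proof.
move=> hK hL; rewrite /hdist gt_max => /andP [KL LK]; split.
  exact: sup_inf_lt hK hL (@mdist_ge0 _ _) KL.
exact: (sup_inf_lt (g := fun b a => mdist a b) hL hK (fun _ _ => mdist_ge0 _ _) LK).
Qed.

Lemma hdist_le (K L : set X) r : K !=set0 -> L !=set0 ->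
  (forall a, K a -> exists2 b, L b & mdist a b <= r) ->
  (forall b, L b -> exists2 a, K a & mdist a b <= r) -> hdist K L <= r.
Proof.
move=> K0 L0 KL LK; rewrite /hdist ge_max; apply/andP; split.
  exact: sup_inf_le K0 (@mdist_ge0 _ _) KL.
exact: (sup_inf_le (g := fun b a => mdist a b) L0 (fun _ _ => mdist_ge0 _ _) LK).
Qed.

Section Fn.
Variable n : nat.
Local Notation opnF := (@Fn_open R X n).

Lemma Fn_openT : opnF [set: Fn X n].
Proof. by move=> K _; exists 1. Qed.

Lemma Fn_openI (U V : set (Fn X n)) : opnF U -> opnF V -> opnF (U `&` V).
Proof.
move=> oU oV K [UK VK]; have [e1 e10 H1] := oU K UK; have [e2 e20 H2] := oV K VK.
exists (Num.min e1 e2); first by rewrite lt_min e10 e20.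
by move=> L; rewrite lt_min => /andP [h1 h2]; split; [exact: H1 | exact: H2].
Qed.

Lemma hdist_Fn_map_le (g : X -> X) (K : Fn X n) r :
  (forall x, proj1_sig K x -> mdist x (g x) <= r) ->
  hdist (proj1_sig K) (proj1_sig (Fn_map g K)) <= r.
Proof.
case: K => K hK /= gr; have [x Kx] := is_Fn_neq0 hK.
apply: hdist_le; [by exists x | by exists (g x), x | |].
  by move=> a Ka; exists (g a); [exists a | exact: gr].
by move=> _ [a Ka <-]; exists a => //; exact: gr.
Qed.

Definition Fn_single : set (Fn X n) := fun K => is_single (proj1_sig K).

Lemma Fn_single_closed : is_closed opnF Fn_single.
Proof.
move=> [K hK] /= nsK; have [x Kx] := is_Fn_neq0 hK.
have [y Ky yx] : exists2 y, K y & y != x.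
  apply: contra_notP nsK => Kx1; exists x; apply/seteqP; split=> [z Kz | z ->] //=.
  by apply: contra_notP Kx1 => /eqP zx; exists z.
exists (mdist x y / 2); first by rewrite divr_gt0 // mdist_gt0 eq_sym.
move=> [L hL] /= KL [z /= Lz]; have [close _] := hdist_lt hK hL KL.
have [_ /[!Lz] /= -> xz] := close x Kx; have [_ /[!Lz] /= -> yz] := close y Ky.
have := metric_triangle x z y; rewrite (metric_sym z y); lra.
Qed.

Lemma Fn_single_empty_interior :
  (1 < n)%N -> perfect_set [set: X] -> ~ int_ne opnF Fn_single.
Proof.
move=> n2 pX [V [oV [K VK] VS]]; have [x Kx] := VS K VK.
have [e e0 eV] := oV K VK; have [y yx xy] := perfectT_mdist pX x e0.
have hL : is_Fn n [set z | z \in [:: x; y]] by exists [:: x; y].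
have [|z xyz] := VS (exist _ _ hL) (eV (exist _ _ hL) _).
  rewrite /= Kx; apply: le_lt_trans xy; apply: hdist_le.
  - by exists x.
  - by exists x; rewrite /= mem_head.
  - by move=> _ ->; exists x; rewrite /= ?mem_head // mdistxx mdist_ge0.
  by move=> b; rewrite /= !inE => /orP [] /eqP ->; exists x; rewrite ?mdistxx ?mdist_ge0.
have xz : x = z by have : [set z] x by rewrite -xyz /= mem_head.
have yz : y = z by have : [set z] y by rewrite -xyz /= !inE eqxx orbT.
by move/eqP: yx; apply; rewrite xz yz.
Qed.

Lemma Fn_map_single (f : X -> X) : Fn_map f @` Fn_single `<=` Fn_single.
Proof. by move=> _ [K [x Kx] <-]; exists (f x); rewrite /= Kx image_set1. Qed.

Lemma SF_q_single (K : Fn X n) : Fn_single K -> SF_q K = None.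
Proof. by rewrite /SF_q; case: pselect. Qed.

Lemma SF_q_nonsingle (K : Fn X n) (nsK : ~ Fn_single K) : SF_q K = Some (exist _ K nsK).
Proof.
rewrite /SF_q; case: pselect => [// | nsK'].
by congr (Some (exist _ _ _)); exact: Prop_irrelevance.
Qed.

Lemma SF_q_surj : [set: X] !=set0 -> (0 < n)%N -> forall c : SF X n, exists K, SF_q K = c.
Proof.
move=> [x _] n0 [[K nsK] |]; first by exists K; exact: SF_q_nonsingle.
by exists (exist _ _ (is_Fn_set1 x n0)); apply: SF_q_single; exists x.
Qed.

Lemma SF_q_inj_off (K L : Fn X n) :
  SF_q K = SF_q L -> K = L \/ Fn_single K /\ Fn_single L.
Proof.
have [sK | nsK] := pselect (Fn_single K); have [sL | nsL] := pselect (Fn_single L).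
- by right.
- by rewrite SF_q_single // SF_q_nonsingle.
- by rewrite SF_q_nonsingle SF_q_single.
by rewrite !SF_q_nonsingle => -[= ->]; left.
Qed.

Lemma SF_q_Fn_map (f : X -> X) (K : Fn X n) : SF_q (Fn_map f K) = SF_map f (SF_q K).
Proof.
have [sK | nsK] := pselect (Fn_single K).
  by rewrite !SF_q_single //; apply: Fn_map_single; exists K.
by rewrite (SF_q_nonsingle nsK).
Qed.

Lemma Fn_subsingleton : (forall x y : X, x = y) -> forall K L : Fn X n, K = L.
Proof.
move=> X1 [K hK] [L hL]; have [x Kx] := is_Fn_neq0 hK; have [y Ly] := is_Fn_neq0 hL.
have KL : K = L by apply/seteqP; split=> z _; [rewrite (X1 z y) | rewrite (X1 z x)].
by move: hL; rewrite -KL => hL; congr exist; exact: Prop_irrelevance.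
Qed.

Lemma SF_subsingleton : (forall x y : X, x = y) -> forall c d : SF X n, c = d.
Proof.
move=> X1; suff noSome (a : {K : Fn X n | ~ Fn_single K}) : False.
  by case=> [a | ] [b | ].
case: a => [[K hK] /= nsK]; apply: nsK; have [x Kx] := is_Fn_neq0 hK.
by exists x; apply/seteqP; split=> [z _ | _ ->] //=; exact: X1.
Qed.

Definition Fn_sub (A : set X) : set (Fn X n) := fun K => proj1_sig K `<=` A.

Lemma Fn_sub_open (U : set X) : open U -> opnF (Fn_sub U).
Proof.
move=> oU [K hK] /= KU; have [s [_ Ks]] := hK.
have [e e0 sU] : exists2 e, 0 < e & forall k, k \in s -> ball k e `<=` U.
  by apply: open_seq_ball oU _ => k ks; apply: KU; rewrite /= Ks.
exists e => // [[L hL]] /= KL l Ll.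
have [_ /(_ l Ll) [k Kk kl]] := hdist_lt hK hL KL.
by apply: (sU k); [move: Kk; rewrite Ks | rewrite ballEmdist].
Qed.

Lemma Fn_sub_closed (A : set X) : is_closed open A -> is_closed opnF (Fn_sub A).
Proof.
move=> cA [K hK] /= nKA.
have [k Kk nAk] : exists2 k, K k & ~ A k.
  by apply: contra_notP nKA => allA k Kk; apply: contra_notP allA => ?; exists k.
have /nbhs_ballP [e /= e0 ekA] : nbhs k (~` A) by move: cA; rewrite openE; apply.
exists e => // [[L hL]] /= KL LA.
have [/(_ k Kk) [l Ll kl] _] := hdist_lt hK hL KL.
by apply: (ekA l); [rewrite ballEmdist | exact: LA].
Qed.

Lemma Fn_map_sub (f : X -> X) (A : set X) :
  f @` A `<=` A -> Fn_map f @` Fn_sub A `<=` Fn_sub A.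
Proof. by move=> fA _ [K KA <-] _ [x Kx <-]; apply: fA; exists x => //; exact: KA. Qed.

Lemma int_ne_Fn_sub (A : set X) : (0 < n)%N ->
  int_ne opnF (Fn_sub A) <-> int_ne open A.
Proof.
move=> n0; split=> [[V [oV [K VK] VA]] | [U [oU [x Ux] UA]]]; last first.
  exists (Fn_sub U); split; first exact: Fn_sub_open.
    by exists (exist _ _ (is_Fn_set1 x n0)) => /= _ ->.
  by move=> K KU z /KU /UA.
have [e e0 eV] := oV K VK; have [k Kk] := is_Fn_neq0 (proj2_sig K).
exists (ball k e)°; split; first exact: open_interior.
  by exists k; apply: nbhs_singleton; apply: nbhs_interior; exact: nbhsx_ballx.
move=> y /interior_subset; rewrite ballEmdist /= => ky.
pose L := Fn_map (fun z => if z == k then y else z) K.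
have VL : V L.
  apply: eV; apply: le_lt_trans ky; apply: hdist_Fn_map_le => z _.
  by case: eqP => [-> | _]; rewrite ?mdistxx ?mdist_ge0.
by apply: (VA L VL); exists k => //; rewrite eqxx.
Qed.

Lemma indecomposable_Fn_map (f : X -> X) : (0 < n)%N ->
  indecomposable opnF (Fn_map f) -> indecomposable open f.
Proof.
move=> n0 indF A B cA cB fA fB iA iB; apply/(int_ne_Fn_sub _ n0).
have := indF _ _ (Fn_sub_closed cA) (Fn_sub_closed cB) (Fn_map_sub fA) (Fn_map_sub fB)
  ((int_ne_Fn_sub _ n0).2 iA) ((int_ne_Fn_sub _ n0).2 iB).
by apply: int_neS => K [KA KB] x Kx; split; [exact: KA | exact: KB].
Qed.

End Fn.
End hyperspace.

Theorem theorem8 (R : realType) (X : metricType R) (n : nat) (f : X -> X) :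
  (2 <= n)%N ->
  [set: X] !=set0 -> compact [set: X] -> connected [set: X] ->
  continuous f ->
  (indecomposable (@Fn_open R X n) (Fn_map f) <->
   indecomposable (@SF_open R X n) (SF_map f)) /\
  (indecomposable (@Fn_open R X n) (Fn_map f) ->
   indecomposable (@open X) f).
Proof.
move=> n2 X0 _ cX _; have n0 : (0 < n)%N by apply: leq_trans n2.
split; last exact: indecomposable_Fn_map.
have [X2 | X1] := pselect (exists x y : X, x != y).
  apply: (indecomposable_quotient (q := @SF_q R X n) (S := @Fn_single R X n)).
  - exact: Fn_openI.
  - by [].
  - exact: SF_q_surj.
  - exact: SF_q_inj_off.
  - exact: SF_q_Fn_map.
  - exact: Fn_single_closed.
  - exact: Fn_single_empty_interior n2 (connected_perfectT cX X2).
  exact: Fn_map_single.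
have {}X1 (x y : X) : x = y by apply: contra_notP X1 => /eqP xy; exists x, y.
split=> _; apply: indecomposable_subsingleton.
- exact: SF_subsingleton.
- exact: Fn_openT.
- exact: Fn_subsingleton.
exact: Fn_openT.
Qed.
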